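(* Consider the system $$\dot x=-y+x(x^3+xy^2)+\sum_{k=1}^2\varepsilon^k\Big(\lambda_kx+\sum_{i+j=4}a_{k,i,j}x^iy^j\Big),\qquad \dot y=x+y(x^3+xy^2)+\sum_{k=1}^2\varepsilon^k\Big(\lambda_ky+\sum_{i+j=4}b_{k,i,j}x^iy^j\Big)$$ with real coefficients. Then the unperturbed equation is $dr/d\theta=r^4\cos\theta$, with solution $r(\theta,z)=z(1-3z^3\sin\theta)^{-1/3}$ for $r(0)=z$, periodic and positive for $z\in D=(0,3^{-1/3})$, and the first order averaged function $f_1$, after the substitution $z=\big[\frac{1-s^2}{3(1+s^2)}\big]^{1/3}$ with $s\in(0,1)$ (a bijection onto $D$), equals $$\frac{\pi\,3^{2/3}(1-s)^{1/3}}{108(1+s)^{11/3}(1+s^2)^{4/3}}\big(N_1s^6+N_2s^5+N_3s^4+N_4s^3+N_3s^2+N_2s+N_1\big),$$ where $N_1=3a_{1,1,3}+a_{1,3,1}-3b_{1,0,4}-b_{1,2,2}-3b_{1,4,0}+72\lambda_1$, $N_2=-4a_{1,1,3}+4b_{1,0,4}+4a_{1,3,1}-4b_{1,2,2}-12b_{1,4,0}+288\lambda_1$, $N_3=5a_{1,1,3}-9a_{1,3,1}-5b_{1,0,4}+9b_{1,2,2}-5b_{1,4,0}+504\lambda_1$, $N_4=-8a_{1,1,3}+8a_{1,3,1}+8b_{1,0,4}-8b_{1,2,2}+40b_{1,4,0}+576\lambda_1$.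
   Context: Averaging framework (first order): in polar coordinates $x=r\cos\theta,y=r\sin\theta$, write $dr/d\theta=F_0(\theta,r)+\varepsilon F_1(\theta,r)+\varepsilon^2F_2(\theta,r)+O(\varepsilon^3)$; let $r(\theta,z)$ solve $dr/d\theta=F_0$ with $r(0,z)=z$ and $Y(\theta,z)$ solve $Y'=\partial_rF_0(\theta,r(\theta,z))Y$, $Y(0,z)=1$ (here $Y=(1-3z^3\sin\theta)^{-4/3}$). The first order averaged function is $f_1(z)=Y(2\pi,z)\int_0^{2\pi}Y(s,z)^{-1}F_1(s,r(s,z))\,ds$. *)

From Stdlib Require Import Reals.
From Coquelicot Require Import Coquelicot.
Open Scope R_scope.

(* Coefficients: a k i j = a_{k,i,j}, b k i j = b_{k,i,j}, lam k = lambda_k. *)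

Definition quart (c : nat -> nat -> nat -> R) (k : nat) (x y : R) : R :=
  sum_f_R0 (fun i => c k i (4 - i)%nat * x ^ i * y ^ (4 - i)) 4.

Definition Pf (a : nat -> nat -> nat -> R) (lam : nat -> R) (eps x y : R) : R :=
  - y + x * (x ^ 3 + x * y ^ 2)
  + eps * (lam 1%nat * x + quart a 1 x y)
  + eps ^ 2 * (lam 2%nat * x + quart a 2 x y).

Definition Qf (b : nat -> nat -> nat -> R) (lam : nat -> R) (eps x y : R) : R :=
  x + y * (x ^ 3 + x * y ^ 2)
  + eps * (lam 1%nat * y + quart b 1 x y)
  + eps ^ 2 * (lam 2%nat * y + quart b 2 x y).

(* dr/dtheta in polar coordinates x = r cos th, y = r sin th (r > 0):
   rdot = (x P + y Q)/r, thetadot = (x Q - y P)/r^2, so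
   dr/dtheta = r (cos th P + sin th Q) / (cos th Q - sin th P). *)
Definition drdth (a b : nat -> nat -> nat -> R) (lam : nat -> R) (eps th r : R) : R :=
  let x := r * cos th in
  let y := r * sin th in
  let P := Pf a lam eps x y in
  let Q := Qf b lam eps x y in
  r * (cos th * P + sin th * Q) / (cos th * Q - sin th * P).

Definition F0 a b lam (th r : R) : R := drdth a b lam 0 th r.
Definition F1 a b lam (th r : R) : R := Derive (fun e => drdth a b lam e th r) 0.

Definition rsol (th z : R) : R := z * Rpower (1 - 3 * z ^ 3 * sin th) (- (1 / 3)).

(* Solution of the variational equation, as given in the context. *)
Definition Ysol (th z : R) : R := Rpower (1 - 3 * z ^ 3 * sin th) (- (4 / 3)).

Definition f1 a b lam (z : R) : R :=
  Ysol (2 * PI) z *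
  RInt (fun s => / Ysol s z * F1 a b lam s (rsol s z)) 0 (2 * PI).

Definition zmax : R := Rpower 3 (- (1 / 3)).

Definition zofs (s : R) : R := Rpower ((1 - s ^ 2) / (3 * (1 + s ^ 2))) (1 / 3).

Definition N1 (a b : nat -> nat -> nat -> R) (lam : nat -> R) : R :=
  3 * a 1%nat 1%nat 3%nat + a 1%nat 3%nat 1%nat - 3 * b 1%nat 0%nat 4%nat
  - b 1%nat 2%nat 2%nat - 3 * b 1%nat 4%nat 0%nat + 72 * lam 1%nat.
Definition N2 (a b : nat -> nat -> nat -> R) (lam : nat -> R) : R :=
  - 4 * a 1%nat 1%nat 3%nat + 4 * b 1%nat 0%nat 4%nat + 4 * a 1%nat 3%nat 1%nat
  - 4 * b 1%nat 2%nat 2%nat - 12 * b 1%nat 4%nat 0%nat + 288 * lam 1%nat.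
Definition N3 (a b : nat -> nat -> nat -> R) (lam : nat -> R) : R :=
  5 * a 1%nat 1%nat 3%nat - 9 * a 1%nat 3%nat 1%nat - 5 * b 1%nat 0%nat 4%nat
  + 9 * b 1%nat 2%nat 2%nat - 5 * b 1%nat 4%nat 0%nat + 504 * lam 1%nat.
Definition N4 (a b : nat -> nat -> nat -> R) (lam : nat -> R) : R :=
  - 8 * a 1%nat 1%nat 3%nat + 8 * a 1%nat 3%nat 1%nat + 8 * b 1%nat 0%nat 4%nat
  - 8 * b 1%nat 2%nat 2%nat + 40 * b 1%nat 4%nat 0%nat + 576 * lam 1%nat.

From Stdlib Require Import Reals Lra Psatz.
From Coquelicot Require Import Coquelicot.
Open Scope R_scope.

(* 1. Polar form.  dr/dtheta is a ratio of two quadratics in eps; its value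
      and eps-derivative at eps = 0 give F0 = r^4 cos th and
      F1 = lam_1 r + r^4 R(th) - r^7 cos th A(th), where R and A are the radial
      and angular components of the quartic perturbation on the unit circle.
   2. The unperturbed solution is r = z w^(-1/3) with w = 1 - 3 z^3 sin th,
      and Y = w^(-4/3), so the averaging integrand collapses to
      lam_1 z w + z^4 R - z^7 cos th A / w.
   3. Over a period: R is antiperiodic (integral 0), the part of cos th A / w
      odd in cos th is cos th f(sin th) (integral 0), and the even part is a
      combination of the integrals of sin^n / w.  These satisfy a recursion
      driven by the Wallis integrals, started by the Poisson-kernel integral
      of 1 / (1 - kappa sin), with kappa = 2 rho / (1 + rho^2).
   4. Under z = z(s) one has 3 z^3 = kappa rho with rho = (1 - s)/(1 + s);
      the closed forms then reduce to the stated polynomial in s, after the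
      fractional powers are identified by comparing cubes. *)

Lemma cube_lt_iff (x y : R) : 0 <= x -> 0 <= y -> (x < y <-> x ^ 3 < y ^ 3).
Proof.
  intros hx hy.
  assert (E : y ^ 3 - x ^ 3 = (y - x) * (x * x + x * y + y * y)) by ring.
  split; intros h.
  - assert (0 < x * x + x * y + y * y) by nra. nra.
  - destruct (Rlt_or_le x y) as [lt | le]; [exact lt |].
    assert (0 <= x * x + x * y + y * y) by nra. nra.
Qed.

(* Hence cubing is injective on nonnegative reals; fractional powers are
   identified by comparing their cubes. *)
Lemma cube_inj (x y : R) : 0 <= x -> 0 <= y -> x ^ 3 = y ^ 3 -> x = y.
Proof.
  intros hx hy h.
  destruct (Rtotal_order x y) as [lt | [eq | gt]]; [| exact eq |].
  - apply (cube_lt_iff x y hx hy) in lt. lra.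
  - apply (cube_lt_iff y x hy hx) in gt. lra.
Qed.

Lemma Rpower_pos (x q : R) : 0 < Rpower x q.
Proof. unfold Rpower. apply exp_pos. Qed.

Lemma Rpower_one (q : R) : Rpower 1 q = 1.
Proof. unfold Rpower. rewrite ln_1, Rmult_0_r. apply exp_0. Qed.

Lemma Rpower_pow_mul (x a : R) (n : nat) : 0 < x -> Rpower x a ^ n = Rpower x (INR n * a).
Proof.
  intros hx. rewrite <- Rpower_pow by apply Rpower_pos.
  rewrite Rpower_mult. f_equal. ring.
Qed.

Lemma Rpower_cube_frac (x : R) (n : nat) : 0 < x -> Rpower x (INR n / 3) ^ 3 = x ^ n.
Proof.
  intros hx. rewrite Rpower_pow_mul by exact hx.
  replace (INR 3 * (INR n / 3)) with (INR n) by (simpl; field).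
  apply Rpower_pow, hx.
Qed.

Lemma Rpower_third_cube (w : R) : 0 < w -> Rpower w (- (1 / 3)) ^ 3 = / w.
Proof.
  intros hw. rewrite Rpower_pow_mul by exact hw.
  replace (INR 3 * - (1 / 3)) with (- INR 1) by (simpl; field).
  rewrite Rpower_Ropp, Rpower_pow by lra. simpl. field. lra.
Qed.

Lemma sin_cos_sq (t : R) : sin t ^ 2 + cos t ^ 2 = 1.
Proof. pose proof (sin2_cos2 t) as H. unfold Rsqr in H. lra. Qed.

Lemma cos_sq (t : R) : cos t ^ 2 = 1 - sin t ^ 2.
Proof. pose proof (sin_cos_sq t). lra. Qed.

Lemma weight_pos (k t : R) : -1 < k < 1 -> 0 < 1 - k * sin t.
Proof.
  intros hk. pose proof (SIN_bound t).
  destruct (Rle_or_lt 0 k); nra.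
Qed.

Lemma quart_hom (c : nat -> nat -> nat -> R) (k : nat) (r x y : R) :
  quart c k (r * x) (r * y) = r ^ 4 * quart c k x y.
Proof. unfold quart. simpl. ring. Qed.

Definition radial_part (a b : nat -> nat -> nat -> R) (t : R) : R :=
  cos t * quart a 1 (cos t) (sin t) + sin t * quart b 1 (cos t) (sin t).

Definition angular_part (a b : nat -> nat -> nat -> R) (t : R) : R :=
  cos t * quart b 1 (cos t) (sin t) - sin t * quart a 1 (cos t) (sin t).

Lemma derive_quadratic_ratio (N0 N1 N2 D0 D1 D2 : R) : D0 <> 0 ->
  Derive (fun e => (N0 + e * N1 + e ^ 2 * N2) / (D0 + e * D1 + e ^ 2 * D2)) 0
  = (N1 * D0 - N0 * D1) / D0 ^ 2.
Proof.
  intros h. apply is_derive_unique. auto_derive.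
  - replace (D0 + 0 * D1 + 0 * (0 * 1) * D2) with D0 by ring. exact h.
  - field. exact h.
Qed.

Lemma drdth_quadratic (a b : nat -> nat -> nat -> R) (lam : nat -> R) (e th r : R) :
  let x := r * cos th in let y := r * sin th in
  let p0 := Pf a lam 0 x y in let q0 := Qf b lam 0 x y in
  let p1 := lam 1%nat * x + quart a 1 x y in let q1 := lam 1%nat * y + quart b 1 x y in
  let p2 := lam 2%nat * x + quart a 2 x y in let q2 := lam 2%nat * y + quart b 2 x y in
  drdth a b lam e th r =
    (r * (cos th * p0 + sin th * q0) + e * (r * (cos th * p1 + sin th * q1))
       + e ^ 2 * (r * (cos th * p2 + sin th * q2)))
    / ((cos th * q0 - sin th * p0) + e * (cos th * q1 - sin th * p1)
       + e ^ 2 * (cos th * q2 - sin th * p2)).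
Proof. unfold drdth, Pf, Qf. cbv zeta. f_equal; ring. Qed.

Lemma unperturbed_polar (a b : nat -> nat -> nat -> R) (lam : nat -> R) (th r : R) :
  let p0 := Pf a lam 0 (r * cos th) (r * sin th) in
  let q0 := Qf b lam 0 (r * cos th) (r * sin th) in
  r * (cos th * p0 + sin th * q0) = r ^ 5 * cos th /\ cos th * q0 - sin th * p0 = r.
Proof.
  unfold Pf, Qf. pose proof (sin_cos_sq th) as H. split.
  - transitivity (r ^ 5 * cos th * (sin th ^ 2 + cos th ^ 2) ^ 2); [ring | rewrite H; ring].
  - transitivity (r * (sin th ^ 2 + cos th ^ 2)); [ring | rewrite H; ring].
Qed.

Lemma F0_polar (a b : nat -> nat -> nat -> R) (lam : nat -> R) (th r : R) :
  0 < r -> F0 a b lam th r = r ^ 4 * cos th.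
Proof.
  intros hr. unfold F0. rewrite drdth_quadratic. cbv zeta.
  destruct (unperturbed_polar a b lam th r) as [HN HD]. cbv zeta in HN, HD.
  rewrite HN, HD. field. lra.
Qed.

Lemma F1_polar (a b : nat -> nat -> nat -> R) (lam : nat -> R) (th r : R) :
  0 < r -> F1 a b lam th r
           = lam 1%nat * r + r ^ 4 * radial_part a b th - r ^ 7 * cos th * angular_part a b th.
Proof.
  intros hr. unfold F1.
  rewrite (Derive_ext _ _ _ (fun e => drdth_quadratic a b lam e th r)).
  destruct (unperturbed_polar a b lam th r) as [HN HD]. cbv zeta in HN, HD |- *.
  rewrite derive_quadratic_ratio, HN, HD by lra.
  unfold radial_part, angular_part. rewrite !quart_hom.
  replace (lam 1%nat * r) with (lam 1%nat * r * (sin th ^ 2 + cos th ^ 2))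
    by (rewrite sin_cos_sq; ring).
  field. lra.
Qed.

Lemma zmax_cube : zmax ^ 3 = / 3.
Proof. unfold zmax. apply Rpower_third_cube. lra. Qed.

Lemma small_cube (z : R) : 0 < z < zmax -> 0 < 3 * z ^ 3 < 1.
Proof.
  intros [hz hzm].
  assert (0 < zmax) by lra.
  apply cube_lt_iff in hzm; [| lra | lra]. rewrite zmax_cube in hzm.
  pose proof (pow_lt z 3 hz). lra.
Qed.

Lemma rsol_pos (th z : R) : 0 < z -> 0 < rsol th z.
Proof.
  intros hz. unfold rsol.
  pose proof (Rpower_pos (1 - 3 * z ^ 3 * sin th) (- (1 / 3))). nra.
Qed.

(* r(th, z) = z w^(-1/3) solves dr/dth = r^4 cos th, since w' = -3 z^3 cos th
   and w^(-4/3) = (w^(-1/3))^4. *)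
Lemma rsol_solves (a b : nat -> nat -> nat -> R) (lam : nat -> R) (z th : R) :
  0 < z -> 3 * z ^ 3 < 1 ->
  is_derive (fun t => rsol t z) th (F0 a b lam th (rsol th z)).
Proof.
  intros hz hk. pose proof (pow_lt z 3 hz).
  pose proof (weight_pos (3 * z ^ 3) th ltac:(lra)) as hw.
  rewrite F0_polar by exact (rsol_pos th z hz).
  pose proof (Rpower_third_cube _ hw) as HE.
  unfold rsol, Rpower in HE |- *.
  set (w := 1 - 3 * z ^ 3 * sin th) in *.
  set (E := exp (- (1 / 3) * ln w)) in *.
  auto_derive; [unfold w in hw; lra |].
  replace (1 + - (3 * (z * (z * (z * 1))) * sin th)) with w by (unfold w; ring).
  fold E.
  replace ((z * E) ^ 4) with (z ^ 4 * E * E ^ 3) by ring. rewrite HE. field. lra.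
Qed.

Lemma is_RInt_transport (f g : R -> R) (a b If Ig : R) :
  (forall t, g t = f t) -> Ig = If -> is_RInt f a b If -> is_RInt g a b Ig.
Proof. intros Hfg -> Hf. apply (is_RInt_ext f); [intros t _; symmetry; apply Hfg | exact Hf]. Qed.

Lemma is_RInt_lincomb (f g : R -> R) (a b If Ig al be : R) :
  is_RInt f a b If -> is_RInt g a b Ig ->
  is_RInt (fun t => al * f t + be * g t) a b (al * If + be * Ig).
Proof.
  intros Hf Hg.
  exact (is_RInt_plus _ _ _ _ _ _ (is_RInt_scal _ _ _ al _ Hf) (is_RInt_scal _ _ _ be _ Hg)).
Qed.

Lemma antiperiodic_integral (g : R -> R) (T : R) :
  (forall t, continuous g t) -> (forall t, g (t + T) = - g t) -> is_RInt g 0 (2 * T) 0.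
Proof.
  intros hc hanti.
  pose proof (RInt_correct g 0 T (ex_RInt_continuous g 0 T (fun t _ => hc t))) as H1.
  set (I := RInt g 0 T) in H1.
  assert (H2 : is_RInt g T (2 * T) (- I)).
  { assert (Hopp : is_RInt (fun t => - g t) (1 * T + - T) (1 * (2 * T) + - T) (- I)).
    { replace (1 * T + - T) with 0 by ring. replace (1 * (2 * T) + - T) with T by ring.
      exact (is_RInt_opp _ _ _ _ H1). }
    refine (is_RInt_ext _ _ _ _ _ _ (is_RInt_comp_lin _ 1 (- T) T (2 * T) _ Hopp)).
    intros t _. unfold scal; simpl; unfold mult; simpl.
    replace (1 * t + - T) with (t + - T) by ring.
    rewrite <- hanti. replace (t + - T + T) with t by ring. ring. }
  refine (is_RInt_transport g g _ _ _ _ (fun t => eq_refl) _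
            (is_RInt_Chasles g 0 T (2 * T) I (- I) H1 H2)).
  unfold plus; simpl; ring.
Qed.

(* Substituting u = sin t: cos t f (sin t) integrates to 0 over a period. *)
Lemma cos_sin_substitution (f : R -> R) :
  (forall u, -1 <= u <= 1 -> continuous f u) ->
  is_RInt (fun t => cos t * f (sin t)) 0 (2 * PI) 0.
Proof.
  intros hf.
  assert (H := is_RInt_comp f sin cos 0 (2 * PI)).
  rewrite sin_0, sin_2PI, RInt_point in H.
  apply H.
  - intros t _. apply hf, SIN_bound.
  - intros t _. split; [apply is_derive_sin | apply continuous_cos].
Qed.

Fixpoint wallis (n : nat) : R :=
  match n with
  | O => 2 * PI
  | S O => 0
  | S (S m as p) => INR p / INR (S p) * wallis m
  end.

(* Integration by parts against sin^(n+1) cos gives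
   (n + 2) W_(n+2) = (n + 1) W_n. *)
Lemma wallis_step (n : nat) (V : R) :
  is_RInt (fun t => sin t ^ n) 0 (2 * PI) V ->
  is_RInt (fun t => sin t ^ S (S n)) 0 (2 * PI) (INR (S n) / INR (S (S n)) * V).
Proof.
  intros HV. rewrite !S_INR.
  assert (hn : 0 <= INR n) by apply pos_INR.
  assert (Hparts : is_RInt (fun t => (INR n + 1) * sin t ^ n - (INR n + 2) * sin t ^ S (S n))
                     0 (2 * PI) 0).
  { refine (is_RInt_transport _ _ _ _ _ _ _ _
      (is_RInt_derive (fun t => sin t ^ S n * cos t)
         (fun t => (INR n + 1) * sin t ^ n - (INR n + 2) * sin t ^ S (S n)) 0 (2 * PI) _ _)).
    - reflexivity.
    - unfold minus, plus, opp; simpl. rewrite sin_0, sin_2PI. ring.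
    - intros t _. auto_derive; [exact I |].
      replace (match n with 0%nat => 1 | S _ => INR n + 1 end) with (INR n + 1)
        by (destruct n; simpl; ring).
      transitivity ((INR n + 1) * sin t ^ n * cos t ^ 2 - sin t ^ S (S n)); [simpl; ring |].
      rewrite cos_sq. simpl. ring.
    - intros t _. apply (ex_derive_continuous (K := R_AbsRing) (V := R_NormedModule)).
      auto_derive. exact I. }
  refine (is_RInt_transport _ _ _ _ _ _ _ _
            (is_RInt_lincomb _ _ _ _ _ _ ((INR n + 1) / (INR n + 1 + 1)) (- / (INR n + 1 + 1))
               HV Hparts)).
  - intros t. field. lra.
  - field. lra.
Qed.

Lemma wallis_correct (n : nat) : is_RInt (fun t => sin t ^ n) 0 (2 * PI) (wallis n).
Proof.
  enough (H : is_RInt (fun t => sin t ^ n) 0 (2 * PI) (wallis n)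
              /\ is_RInt (fun t => sin t ^ S n) 0 (2 * PI) (wallis (S n))) by apply H.
  induction n as [| n [IH IH1]].
  - split.
    + refine (is_RInt_transport (fun _ => 1) _ _ _ _ _ _ _ (is_RInt_const 0 (2 * PI) 1)).
      * intros t. reflexivity.
      * unfold scal; simpl; unfold mult; simpl. ring.
    + apply (antiperiodic_integral (fun t => sin t ^ 1) PI).
      * intros t. apply (ex_derive_continuous (K := R_AbsRing) (V := R_NormedModule)).
        auto_derive. exact I.
      * intros t. rewrite neg_sin. ring.
  - split; [exact IH1 | exact (wallis_step n _ IH)].
Qed.

Definition kappa (rho : R) : R := 2 * rho / (1 + rho ^ 2).

Lemma kappa_range (rho : R) : 0 < rho < 1 -> 0 < kappa rho < 1.
Proof.
  intros hr. unfold kappa. split.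
  - apply Rdiv_lt_0_compat; nra.
  - apply Rlt_div_l; nra.
Qed.

(* Poisson-kernel integral: t + 2 atan(- rho cos t / (1 - rho sin t)) is a
   continuous primitive of (1 - rho^2)/(1 - 2 rho sin t + rho^2). *)
Lemma poisson_integral (rho : R) : 0 < rho < 1 ->
  is_RInt (fun t => / (1 - kappa rho * sin t)) 0 (2 * PI) (2 * PI * (1 + rho ^ 2) / (1 - rho ^ 2)).
Proof.
  intros hr.
  assert (Hd : forall t, 0 < 1 - rho * sin t) by (intro t; pose proof (SIN_bound t); nra).
  assert (Hd2 : forall t, 0 < 1 - 2 * rho * sin t + rho ^ 2)
    by (intro t; pose proof (SIN_bound t); nra).
  set (G := fun t => t + 2 * atan (- rho * cos t / (1 - rho * sin t))).
  set (dG := fun t => (1 - rho ^ 2) / (1 - 2 * rho * sin t + rho ^ 2)).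
  assert (HG : is_RInt dG 0 (2 * PI) (minus (G (2 * PI)) (G 0))).
  { apply (is_RInt_derive G dG).
    - intros t _. unfold G, dG. auto_derive; [pose proof (Hd t); lra |].
      pose proof (Hd t); pose proof (Hd2 t); pose proof (cos_sq t).
      field_simplify; [| lra | split; [lra | nra]].
      replace (cos t ^ 2) with (1 - sin t ^ 2) by lra. field. nra.
    - intros t _. apply (ex_derive_continuous (K := R_AbsRing) (V := R_NormedModule)).
      unfold dG. auto_derive. pose proof (Hd2 t); lra. }
  refine (is_RInt_transport _ _ _ _ _ _ _ _
            (is_RInt_scal _ _ _ ((1 + rho ^ 2) / (1 - rho ^ 2)) _ HG)).
  - intros t. pose proof (Hd2 t). unfold dG, kappa, scal; simpl; unfold mult; simpl.
    field. split; nra.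
  - unfold G, scal, minus, plus, opp; simpl; unfold mult; simpl.
    rewrite sin_0, sin_2PI, cos_0, cos_2PI. field. nra.
Qed.

(* The integrals of sin^n / (1 - kappa sin); since
   sin^(n+1) / w = (sin^n / w - sin^n) / kappa, they follow from the Wallis ones. *)
Fixpoint weighted_wallis (rho : R) (n : nat) : R :=
  match n with
  | O => 2 * PI * (1 + rho ^ 2) / (1 - rho ^ 2)
  | S m => (weighted_wallis rho m - wallis m) / kappa rho
  end.

Lemma weighted_wallis_correct (rho : R) (n : nat) : 0 < rho < 1 ->
  is_RInt (fun t => sin t ^ n / (1 - kappa rho * sin t)) 0 (2 * PI) (weighted_wallis rho n).
Proof.
  intros hr. pose proof (kappa_range rho hr) as hk.
  induction n as [| n IH].
  - refine (is_RInt_transport _ _ _ _ _ _ _ eq_refl (poisson_integral rho hr)).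
    intros t. simpl. field. pose proof (weight_pos (kappa rho) t ltac:(lra)). lra.
  - refine (is_RInt_transport _ _ _ _ _ _ _ _
              (is_RInt_lincomb _ _ _ _ _ _ (/ kappa rho) (- / kappa rho) IH (wallis_correct n))).
    + intros t. pose proof (weight_pos (kappa rho) t ltac:(lra)).
      simpl. field. lra.
    + simpl. field. lra.
Qed.

Lemma even_sin_ratio_integral (rho e0 e2 e4 e6 : R) : 0 < rho < 1 ->
  is_RInt (fun t => (e0 + e2 * sin t ^ 2 + e4 * sin t ^ 4 + e6 * sin t ^ 6)
                    / (1 - kappa rho * sin t)) 0 (2 * PI)
    (e0 * weighted_wallis rho 0 + e2 * weighted_wallis rho 2
     + e4 * weighted_wallis rho 4 + e6 * weighted_wallis rho 6).
Proof.
  intros hr. pose proof (kappa_range rho hr) as hk.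
  pose proof (fun n => weighted_wallis_correct rho n hr) as W.
  refine (is_RInt_transport _ _ _ _ _ _ _ _
    (is_RInt_lincomb _ _ _ _ _ _ e0 1 (W 0%nat)
      (is_RInt_lincomb _ _ _ _ _ _ e2 1 (W 2%nat)
        (is_RInt_lincomb _ _ _ _ _ _ e4 e6 (W 4%nat) (W 6%nat))))).
  - intros t. pose proof (weight_pos (kappa rho) t ltac:(lra)). field. lra.
  - ring.
Qed.

(* The integral of cos t A(t) / (1 - kappa sin t): only the coefficients of the
   monomials even in cos contribute. *)
Definition angular_mean (a b : nat -> nat -> nat -> R) (rho : R) : R :=
  let W := weighted_wallis rho in
  ((b 1 0 4)%nat - (a 1 1 3)%nat) * (W 4%nat - W 6%nat)
  + ((b 1 2 2)%nat - (a 1 3 1)%nat) * (W 2%nat - 2 * W 4%nat + W 6%nat)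
  + (b 1 4 0)%nat * (W 0%nat - 3 * W 2%nat + 3 * W 4%nat - W 6%nat).

(* Split cos A / w into cos t f(sin t), which integrates to 0, and an even
   polynomial in sin t over w, using cos^2 = 1 - sin^2. *)
Lemma angular_average (a b : nat -> nat -> nat -> R) (rho : R) : 0 < rho < 1 ->
  is_RInt (fun t => cos t * angular_part a b t / (1 - kappa rho * sin t)) 0 (2 * PI)
    (angular_mean a b rho).
Proof.
  intros hr. pose proof (kappa_range rho hr) as hk.
  set (k := kappa rho) in *.
  set (a04 := a 1%nat 0%nat 4%nat). set (a13 := a 1%nat 1%nat 3%nat).
  set (a22 := a 1%nat 2%nat 2%nat). set (a31 := a 1%nat 3%nat 1%nat).
  set (a40 := a 1%nat 4%nat 0%nat). set (b04 := b 1%nat 0%nat 4%nat).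
  set (b13 := b 1%nat 1%nat 3%nat). set (b22 := b 1%nat 2%nat 2%nat).
  set (b31 := b 1%nat 3%nat 1%nat). set (b40 := b 1%nat 4%nat 0%nat).
  set (odd_part := fun u =>
         ((b13 - a22) * (1 - u ^ 2) * u ^ 3 + (b31 - a40) * (1 - u ^ 2) ^ 2 * u - a04 * u ^ 5)
         / (1 - k * u)).
  assert (Hodd : is_RInt (fun t => cos t * odd_part (sin t)) 0 (2 * PI) 0).
  { apply cos_sin_substitution. intros u hu.
    apply (ex_derive_continuous (K := R_AbsRing) (V := R_NormedModule)).
    unfold odd_part. auto_derive. nra. }
  pose proof (even_sin_ratio_integral rho b40 (b22 - a31 - 3 * b40)
                (b04 - a13 - 2 * (b22 - a31) + 3 * b40) (a13 - b04 + b22 - a31 - b40) hr) as Heven.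
  fold k in Heven.
  refine (is_RInt_transport _ _ _ _ _ _ _ _ (is_RInt_lincomb _ _ _ _ _ _ 1 1 Hodd Heven)).
  - intros t. pose proof (weight_pos k t ltac:(lra)).
    transitivity (((b04 - a13) * cos t ^ 2 * sin t ^ 4 + (b22 - a31) * (cos t ^ 2) ^ 2 * sin t ^ 2
                   + b40 * (cos t ^ 2) ^ 3
                   + cos t * ((b13 - a22) * cos t ^ 2 * sin t ^ 3
                              + (b31 - a40) * (cos t ^ 2) ^ 2 * sin t - a04 * sin t ^ 5))
                  / (1 - k * sin t)).
    + unfold angular_part, quart. simpl. fold a04 a13 a22 a31 a40 b04 b13 b22 b31 b40.
      field. lra.
    + rewrite cos_sq. unfold odd_part. field. lra.
  - unfold angular_mean. cbv zeta. fold a13 a31 b04 b22 b40. ring.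
Qed.

(* R(t + pi) = - R(t): the radial part has zero average. *)
Lemma radial_average (a b : nat -> nat -> nat -> R) :
  is_RInt (radial_part a b) 0 (2 * PI) 0.
Proof.
  apply antiperiodic_integral.
  - intros t. apply (ex_derive_continuous (K := R_AbsRing) (V := R_NormedModule)).
    unfold radial_part, quart. simpl. auto_derive. exact I.
  - intros t. unfold radial_part, quart. rewrite neg_sin, neg_cos. simpl. ring.
Qed.

(* The integrand of f1 along the solution, with E = w^(-1/3):
   r = z E, Y = E^4 and E^3 = 1 / w. *)
Lemma averaging_integrand (a b : nat -> nat -> nat -> R) (lam : nat -> R) (z t : R) :
  0 < z -> 3 * z ^ 3 < 1 ->
  / Ysol t z * F1 a b lam t (rsol t z)
  = lam 1%nat * z * (1 - 3 * z ^ 3 * sin t) + z ^ 4 * radial_part a b t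
    - z ^ 7 * (cos t * angular_part a b t / (1 - 3 * z ^ 3 * sin t)).
Proof.
  intros hz hk. pose proof (pow_lt z 3 hz).
  pose proof (weight_pos (3 * z ^ 3) t ltac:(lra)) as hw.
  set (w := 1 - 3 * z ^ 3 * sin t) in *.
  set (E := Rpower w (- (1 / 3))).
  assert (HE : 0 < E) by apply Rpower_pos.
  assert (HE3 : E ^ 3 = / w) by exact (Rpower_third_cube w hw).
  assert (HY : Ysol t z = E ^ 4).
  { unfold E. rewrite Rpower_pow_mul by exact hw. unfold Ysol. fold w. f_equal. simpl. field. }
  assert (Hr : rsol t z = z * E) by reflexivity.
  rewrite F1_polar by (rewrite Hr; nra).
  rewrite Hr, HY.
  replace w with (/ E ^ 3) by (rewrite HE3; field; lra).
  field. lra.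
Qed.

(* Since Y(2 pi) = 1, f1 is the period integral of the integrand above; the
   weight contributes 2 pi lam_1 z and the radial part nothing. *)
Lemma f1_formula (a b : nat -> nat -> nat -> R) (lam : nat -> R) (z rho : R) :
  0 < rho < 1 -> 0 < z -> 3 * z ^ 3 = kappa rho ->
  f1 a b lam z = 2 * PI * lam 1%nat * z - z ^ 7 * angular_mean a b rho.
Proof.
  intros hr hz hk. pose proof (kappa_range rho hr) as hk_range.
  assert (HY : Ysol (2 * PI) z = 1).
  { unfold Ysol. rewrite sin_2PI, Rmult_0_r, Rminus_0_r. apply Rpower_one. }
  unfold f1. rewrite HY, Rmult_1_l.
  apply is_RInt_unique.
  pose proof (is_RInt_lincomb _ _ _ _ _ _ (lam 1%nat * z) (- (lam 1%nat * z * kappa rho))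
                (wallis_correct 0) (wallis_correct 1)) as Hweight.
  pose proof (is_RInt_lincomb _ _ _ _ _ _ (z ^ 4) (- z ^ 7)
                (radial_average a b) (angular_average a b rho hr)) as Hpert.
  refine (is_RInt_transport _ _ _ _ _ _ _ _ (is_RInt_lincomb _ _ _ _ _ _ 1 1 Hweight Hpert)).
  - intros t. rewrite averaging_integrand by lra. rewrite hk. simpl. ring.
  - simpl. ring.
Qed.

Lemma zofs_pos (s : R) : 0 < zofs s.
Proof. apply Rpower_pos. Qed.

Lemma zofs_cube (s : R) : 0 < s < 1 -> zofs s ^ 3 = (1 - s ^ 2) / (3 * (1 + s ^ 2)).
Proof.
  intros hs. unfold zofs. replace (1 / 3) with (INR 1 / 3) by (simpl; field).
  rewrite Rpower_cube_frac by (apply Rdiv_lt_0_compat; nra). ring.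
Qed.

Lemma zofs_range (s : R) : 0 < s < 1 -> 0 < zofs s < zmax.
Proof.
  intros hs. split; [apply zofs_pos |].
  apply cube_lt_iff; [left; apply zofs_pos | left; apply Rpower_pos |].
  rewrite zofs_cube, zmax_cube by exact hs.
  apply Rlt_div_l; nra.
Qed.

(* The inverse is s = sqrt((1 - 3 z^3)/(1 + 3 z^3)). *)
Lemma zofs_bijective (z : R) : 0 < z < zmax -> exists! s : R, 0 < s < 1 /\ zofs s = z.
Proof.
  intros hzD. pose proof (small_cube z hzD) as hk. destruct hzD as [hz _].
  set (t := z ^ 3) in *.
  assert (hq : 0 < (1 - 3 * t) / (1 + 3 * t)) by (apply Rdiv_lt_0_compat; lra).
  set (s := sqrt ((1 - 3 * t) / (1 + 3 * t))).
  assert (hs2 : s ^ 2 = (1 - 3 * t) / (1 + 3 * t))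
    by (unfold s; simpl; rewrite Rmult_1_r; apply sqrt_sqrt; lra).
  assert (hs0 : 0 < s) by (apply sqrt_lt_R0; exact hq).
  assert (hs1 : s < 1).
  { assert (s ^ 2 < 1) by (rewrite hs2; apply Rlt_div_l; lra). nra. }
  exists s. split.
  - split; [lra |].
    apply cube_inj; [left; apply zofs_pos | lra |].
    rewrite zofs_cube, hs2 by lra. fold t. field. lra.
  - intros s' [hs' e].
    assert (s' ^ 2 = s ^ 2).
    { pose proof (zofs_cube s' hs') as h. rewrite e in h. fold t in h.
      rewrite hs2, h. field. nra. }
    nra.
Qed.

Lemma prefactor_identity (s : R) : 0 < s < 1 ->
  Rpower 3 (2 / 3) * Rpower (1 - s) (1 / 3) / (Rpower (1 + s) (11 / 3) * Rpower (1 + s ^ 2) (4 / 3))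
  = 3 * zofs s / ((1 + s) ^ 4 * (1 + s ^ 2)).
Proof.
  intros hs.
  assert (Hcube : forall x (n : nat) q, 0 < x -> q = INR n / 3 -> Rpower x q ^ 3 = x ^ n)
    by (intros x n q hx ->; apply Rpower_cube_frac, hx).
  pose proof (Hcube 3 2%nat (2 / 3) ltac:(lra) ltac:(simpl; field)) as C1.
  pose proof (Hcube (1 - s) 1%nat (1 / 3) ltac:(lra) ltac:(simpl; field)) as C2.
  pose proof (Hcube (1 + s) 11%nat (11 / 3) ltac:(lra) ltac:(simpl; field)) as C3.
  pose proof (Hcube (1 + s ^ 2) 4%nat (4 / 3) ltac:(nra) ltac:(simpl; field)) as C4.
  pose proof (Rpower_pos (1 + s) (11 / 3)). pose proof (Rpower_pos (1 + s ^ 2) (4 / 3)).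
  apply cube_inj.
  - left. apply Rdiv_lt_0_compat; apply Rmult_lt_0_compat; apply Rpower_pos.
  - left. pose proof (zofs_pos s). apply Rdiv_lt_0_compat; nra.
  - unfold Rdiv in C1, C2, C3, C4 |- *.
    rewrite !Rpow_mult_distr, !pow_inv, !Rpow_mult_distr, C1, C2, C3, C4, zofs_cube by nra.
    field. nra.
Qed.

(* With rho = (1 - s)/(1 + s) one has 3 z(s)^3 = kappa rho, and the closed
   forms of the weighted Wallis integrals give the stated polynomial. *)
Lemma averaged_function_in_s (a b : nat -> nat -> nat -> R) (lam : nat -> R) (s : R) :
  0 < s < 1 ->
  f1 a b lam (zofs s) =
    PI * Rpower 3 (2 / 3) * Rpower (1 - s) (1 / 3)
    / (108 * Rpower (1 + s) (11 / 3) * Rpower (1 + s ^ 2) (4 / 3))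
    * (N1 a b lam * s ^ 6 + N2 a b lam * s ^ 5 + N3 a b lam * s ^ 4
       + N4 a b lam * s ^ 3 + N3 a b lam * s ^ 2 + N2 a b lam * s + N1 a b lam).
Proof.
  intros hs.
  set (rho := (1 - s) / (1 + s)).
  assert (hr : 0 < rho < 1) by (unfold rho; split; [apply Rdiv_lt_0_compat | apply Rlt_div_l]; lra).
  assert (hk : 3 * zofs s ^ 3 = kappa rho)
    by (rewrite zofs_cube by exact hs; unfold kappa, rho; field; nra).
  rewrite (f1_formula a b lam (zofs s) rho hr (zofs_pos s) hk).
  assert (Hpow : forall x q, Rpower x q <> 0) by (intros; apply Rgt_not_eq, Rpower_pos).
  replace (PI * Rpower 3 (2 / 3) * Rpower (1 - s) (1 / 3)
           / (108 * Rpower (1 + s) (11 / 3) * Rpower (1 + s ^ 2) (4 / 3)))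
    with (PI / 108 * (Rpower 3 (2 / 3) * Rpower (1 - s) (1 / 3)
                      / (Rpower (1 + s) (11 / 3) * Rpower (1 + s ^ 2) (4 / 3))))
    by (field; split; apply Hpow).
  rewrite prefactor_identity by exact hs.
  replace (zofs s ^ 7) with (zofs s * (zofs s ^ 3) ^ 2) by ring.
  rewrite zofs_cube by exact hs.
  unfold angular_mean, N1, N2, N3, N4, rho. simpl. unfold kappa. field. repeat split; nra.
Qed.

Theorem mainTheorem7 (a b : nat -> nat -> nat -> R) (lam : nat -> R) :
  (forall th r : R, 0 < r -> F0 a b lam th r = r ^ 4 * cos th) /\
  (forall z : R, 0 < z < zmax ->
     rsol 0 z = z /\
     (forall th : R, is_derive (fun t => rsol t z) th (F0 a b lam th (rsol th z))) /\
     (forall th : R, 0 < rsol th z) /\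
     (forall th : R, rsol (th + 2 * PI) z = rsol th z)) /\
  (forall s : R, 0 < s < 1 -> 0 < zofs s < zmax) /\
  (forall z : R, 0 < z < zmax -> exists! s : R, 0 < s < 1 /\ zofs s = z) /\
  (forall s : R, 0 < s < 1 ->
     f1 a b lam (zofs s) =
       PI * Rpower 3 (2 / 3) * Rpower (1 - s) (1 / 3)
       / (108 * Rpower (1 + s) (11 / 3) * Rpower (1 + s ^ 2) (4 / 3))
       * (N1 a b lam * s ^ 6 + N2 a b lam * s ^ 5 + N3 a b lam * s ^ 4
          + N4 a b lam * s ^ 3 + N3 a b lam * s ^ 2 + N2 a b lam * s
          + N1 a b lam)).
Proof.
  split; [exact (F0_polar a b lam) |].
  split; [| split; [exact zofs_range |
                    split; [exact zofs_bijective | exact (averaged_function_in_s a b lam)]]].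
  intros z hzD. pose proof (small_cube z hzD) as hk. destruct hzD as [hz _].
  split; [| split; [| split]].
  - unfold rsol. rewrite sin_0, Rmult_0_r, Rminus_0_r, Rpower_one. ring.
  - intros th. apply rsol_solves; lra.
  - intros th. apply rsol_pos, hz.
  - intros th. unfold rsol. rewrite sin_plus, sin_2PI, cos_2PI, Rmult_0_r, Rplus_0_r, Rmult_1_r.
    reflexivity.
Qed.
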